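(* Let $G$ be a graph and $m\geq 1$. Suppose $E(G)$ is partitioned into the edge set of a DVOP$[k']$ in $G$ and a complementary edge set $E'$, and also $E(G)$ is partitioned into the edge set of a DVOP$[k'']$ in $G$ and a complementary edge set $E''$. Then $E(m\#G)$ can be partitioned into the edge sets of $|V(G)|$ paths each isomorphic to $P_{k'+m+k''}$, together with the copy of $E'$ in $G'$ and the copy of $E''$ in $G''$.
   Context: $P_k$ is the path with vertices $0,1,\dots,k$ and edges $\hat{j}$ joining $j-1$ and $j$. For a graph $G$, a DVOP$[k]$ is a family $\{p_v\}_{v\in V(G)}$ of embeddings $p_v:P_k\to G$ such that (a) $p_v(\hat{j})=p_{v'}(\hat{j'})$ implies $v=v'$ and $j=j'$, and (b) $p_v(0)=v$ for every $v$; its edge set is the union of the edge images of all $p_v$. For a graph $G$ and $m\geq 1$, $m\#G$ is the graph obtained by taking two disjoint copies $G'$ and $G''$ of $G$ and joining each vertex $v'\in V(G')$ to the corresponding vertex $v''\in V(G'')$ by a path with $m$ edges, these new paths being internally vertex-disjoint from each other and from $G'\cup G''$. *)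

From mathcomp Require Import all_boot.
Set Implicit Arguments. Unset Strict Implicit. Unset Printing Implicit Defensive.

(* A (finite simple) graph is a vertex type T : finType with a symmetric,
   irreflexive adjacency relation e. Edges are unordered pairs {x,y}. *)
Section Graphs.
Variables (T : finType) (e : rel T).

Definition Egraph : {set {set T}} :=
  [set s | [exists x, exists y, e x y && (s == [set x; y])]].

(* For f : 'I_k.+1 -> T (image of the vertices 0..k of P_k) and j : 'I_k,
   pedge f j is the image of the edge \hat{j+1} joining vertices j and j+1. *)
Definition pedge (k : nat) (f : 'I_k.+1 -> T) (j : 'I_k) : {set T} :=
  [set f (widen_ord (leqnSn k) j); f (lift ord0 j)].

Definition embedding (k : nat) (f : 'I_k.+1 -> T) : Prop :=
  injective f /\ forall j : 'I_k, e (f (widen_ord (leqnSn k) j)) (f (lift ord0 j)).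

Definition DVOP (k : nat) (p : T -> 'I_k.+1 -> T) : Prop :=
  [/\ forall v, embedding (p v),
      forall v v' (j j' : 'I_k), pedge (p v) j = pedge (p v') j' -> v = v' /\ j = j'
    & forall v, p v ord0 = v].

End Graphs.

(* union of the edge images of a family of maps P_k -> G indexed by I;
   for I = V(G) and p a DVOP this is the edge set of the DVOP *)
Definition dvop_edges (I T : finType) (k : nat) (p : I -> 'I_k.+1 -> T)
  : {set {set T}} :=
  [set pedge (p v) j | v : I, j : 'I_k].

(* m#G on vertex type T * 'I_m.+1 : (v,0) is v' in G', (v,m) is v'' in G'',
   and (v,1),...,(v,m-1) are the internal vertices of the path v'--v''.
   (Intended for m >= 1.) *)
Definition sharp (T : finType) (e : rel T) (m : nat) : rel (T * 'I_m.+1) :=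
  fun a b =>
    [|| [&& val a.2 == 0, val b.2 == 0 & e a.1 b.1],
        [&& val a.2 == m, val b.2 == m & e a.1 b.1]
      | (a.1 == b.1) && (((val a.2).+1 == val b.2) || ((val b.2).+1 == val a.2))].

Definition lift_set (T : finType) (m : nat) (i : 'I_m.+1) (s : {set T})
  : {set (T * 'I_m.+1)} := [set (x, i) | x in s].

Definition copy_at (T : finType) (m : nat) (i : 'I_m.+1) (E : {set {set T}})
  : {set {set (T * 'I_m.+1)}} :=
  [set lift_set i s | s in E].

Arguments sharp [T] e m _ _.

From mathcomp Require Import all_boot zify.
Set Implicit Arguments. Unset Strict Implicit. Unset Printing Implicit Defensive.

(* For every vertex v, run backwards along the first path of v in the copy G', then along
   the rung v'--v'' of length m, then forwards along the second path of v in G''.  The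
   edges of m#G are the copies of E(G) in G' and G'' together with the rung edges; the new
   paths use every rung edge exactly once, and their G'- and G''-parts are exactly the
   copies of the two given path families.  Hence adding the copies of the complements E'
   (in G') and E'' (in G'') partitions E(m#G). *)

Section LiftSet.
Variables (T : finType) (m : nat).
Implicit Types (i j : 'I_m.+1) (s : {set T}) (A B : {set {set T}}).

Lemma mem_lift_set i j s x : ((x, j) \in lift_set i s) = (j == i) && (x \in s).
Proof.
apply/imsetP/andP => [[y ys [-> ->]]|[/eqP -> xs]]; first by rewrite eqxx.
by exists x.
Qed.

Lemma lift_set2 i (x y : T) : lift_set i [set x; y] = [set (x, i); (y, i)].
Proof.
apply/setP => -[z j]; rewrite mem_lift_set !in_set2 !xpair_eqE.
by case: (j == i); rewrite ?andbT ?andbF.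
Qed.

Lemma lift_set_inj i : injective (@lift_set T m i).
Proof.
move=> s s' eq_ss'; apply/setP => x.
have := congr1 (fun S : {set T * 'I_m.+1} => (x, i) \in S) eq_ss'.
by rewrite /= !mem_lift_set eqxx.
Qed.

Lemma lift_set_level i j s s' x : x \in s -> lift_set i s = lift_set j s' -> i = j.
Proof.
move=> xs eq_ss'; have : (x, i) \in lift_set j s' by rewrite -eq_ss' mem_lift_set eqxx.
by rewrite mem_lift_set => /andP[/eqP].
Qed.

Lemma copy_at0 i : copy_at i set0 = set0 :> {set {set T * 'I_m.+1}}.
Proof. exact: imset0. Qed.

Lemma copy_atU i A B : copy_at i (A :|: B) = copy_at i A :|: copy_at i B.
Proof. exact: imsetU. Qed.

Lemma copy_atI i A B : copy_at i (A :&: B) = copy_at i A :&: copy_at i B.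
Proof. by apply: imsetI => s s' _ _; apply: lift_set_inj. Qed.

Lemma copy_at_disjoint i j A B :
  i != j -> set0 \notin A -> copy_at i A :&: copy_at j B = set0.
Proof.
move=> neq_ij A0; apply/setP => S; rewrite inE in_set0.
apply/andP => -[/imsetP[s sA ->] /imsetP[s' _ eq_ss']].
have [x xs] : exists x, x \in s.
  by apply/set0Pn; apply: contraNneq A0 => <-.
by move: neq_ij; rewrite (lift_set_level xs eq_ss') eqxx.
Qed.

End LiftSet.

Lemma eq_set2 (T : finType) (x y a b : T) :
  [set x; y] = [set a; b] -> (x = a /\ y = b) \/ (x = b /\ y = a).
Proof.
move=> eq_xy; have Sx : x \in [set a; b] by rewrite -eq_xy set21.
have Sy : y \in [set a; b] by rewrite -eq_xy set22.
have Sa : a \in [set x; y] by rewrite eq_xy set21.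
have Sb : b \in [set x; y] by rewrite eq_xy set22.
move: Sx Sy Sa Sb; rewrite !in_set2.
by do 4 case/orP=> /eqP ?; subst; auto.
Qed.

Lemma mem_dvop_edges (I T : finType) k (p : I -> 'I_k.+1 -> T) v j :
  pedge (p v) j \in dvop_edges p.
Proof. by apply/imset2P; exists v j. Qed.

Section Graph.
Variables (T : finType) (e : rel T).

Lemma mem_Egraph x y : e x y -> [set x; y] \in Egraph e.
Proof.
by move=> exy; rewrite inE; apply/existsP; exists x; apply/existsP; exists y; rewrite exy eqxx.
Qed.

Lemma set0_notin_sub_Egraph (A : {set {set T}}) : A \subset Egraph e -> set0 \notin A.
Proof.
move=> sA; apply/negP => /(subsetP sA); rewrite inE.
by case/existsP => x /existsP[y /andP[_ /eqP/setP/(_ x)]]; rewrite in_set0 set21.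
Qed.

Lemma Egraph_adj : symmetric e -> forall x y, [set x; y] \in Egraph e -> e x y.
Proof.
move=> e_sym x y; rewrite inE => /existsP[a /existsP[b /andP[eab /eqP]]].
by case/eq_set2 => -[-> ->]; rewrite // e_sym.
Qed.

Lemma dvop_edges_sub_Egraph (I : finType) k (p : I -> 'I_k.+1 -> T) :
  (forall v, embedding e (p v)) -> dvop_edges p \subset Egraph e.
Proof.
by move=> p_emb; apply/subsetP => _ /imset2P[v j _ _ ->]; apply/mem_Egraph/(p_emb v).2.
Qed.

Lemma embedding_Egraph k (f : 'I_k.+1 -> T) :
  symmetric e -> injective f -> (forall j, pedge f j \in Egraph e) -> embedding e f.
Proof. by move=> e_sym f_inj f_edges; split=> // j; apply/Egraph_adj/f_edges. Qed.

End Graph.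

(* The path v'--v'' of m#G; over all v, its edges are those of m#G outside G' and G''. *)
Definition rung_paths (T : finType) (m : nat) (v : T) (i : 'I_m.+1) : T * 'I_m.+1 :=
  (v, i).

Definition rungs (T : finType) (m : nat) : {set {set T * 'I_m.+1}} :=
  dvop_edges (@rung_paths T m).

Section Sharp.
Variables (T : finType) (e : rel T) (m : nat).

Lemma sharp_sym : symmetric e -> symmetric (sharp e m).
Proof.
move=> e_sym a b; rewrite /sharp e_sym (eq_sym b.1) [(_.+1 == _) || _]orbC.
by case: (val a.2 == 0); case: (val b.2 == 0); case: (val a.2 == m); case: (val b.2 == m).
Qed.

Lemma rung_paths_inj (v v' : T) (r r' : 'I_m) :
  pedge (rung_paths v) r = pedge (rung_paths v') r' -> v = v' /\ r = r'.
Proof.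
rewrite /pedge /rung_paths => /eq_set2[] [] [-> eq1] [eq2];
  by split=> //; apply: ord_inj; move: eq1 eq2; rewrite /bump /=; lia.
Qed.

Lemma rung_neq_lift_set (v : T) (r : 'I_m) i (s : {set T}) :
  pedge (rung_paths v) r != lift_set i s.
Proof.
apply/eqP => eq_rs.
have : (v, widen_ord (leqnSn m) r) \in lift_set i s by rewrite -eq_rs set21.
have : (v, lift ord0 r) \in lift_set i s by rewrite -eq_rs set22.
rewrite !mem_lift_set => /andP[/eqP <- _] /andP[/eqP/(congr1 val)] /=.
by rewrite /bump /=; lia.
Qed.

Lemma rungsI_copy_at i (A : {set {set T}}) : rungs T m :&: copy_at i A = set0.
Proof.
apply/setP => S; rewrite inE in_set0.
apply/andP => -[/imset2P[v r _ _ ->] /imsetP[s _ /eqP]].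
by rewrite (negbTE (rung_neq_lift_set _ _ _ _)).
Qed.

Lemma Egraph_sharp :
  Egraph (sharp e m) =
  copy_at ord0 (Egraph e) :|: copy_at ord_max (Egraph e) :|: rungs T m.
Proof.
apply/setP => S; apply/idP/idP.
- rewrite inE => /existsP[[x i] /existsP[[y j] /andP[]]].
  rewrite /sharp /= => /or3P[/and3P[/eqP i0 /eqP j0 exy] | /and3P[/eqP im /eqP jm exy] |
                             /andP[/eqP <- ij]] /eqP ->.
  + have -> : i = ord0 by apply: val_inj.
    have -> : j = ord0 by apply: val_inj.
    rewrite -lift_set2 !inE -orbA; apply/or3P/Or31/imsetP.
    by exists [set x; y]; rewrite ?mem_Egraph.
  + have -> : i = ord_max by apply: val_inj.
    have -> : j = ord_max by apply: val_inj.
    rewrite -lift_set2 !inE -orbA; apply/or3P/Or32/imsetP.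
    by exists [set x; y]; rewrite ?mem_Egraph.
  + wlog ij1 : i j {ij} / i.+1 = j.
      by move=> W; case/orP: ij => /eqP ?; [|rewrite setUC]; apply: W.
    have ltim : i < m by rewrite -ltnS ij1.
    rewrite !inE -orbA; apply/or3P/Or33/imset2P; exists x (Ordinal ltim) => //.
    by congr [set (x, _); (x, _)]; apply: val_inj; rewrite //= /bump /= add1n.
- case/setUP => [/setUP[] /imsetP[s] | /imset2P[v r _ _ ->]].
  + rewrite inE => /existsP[x /existsP[y /andP[exy /eqP ->]]] ->.
    by rewrite lift_set2; apply: mem_Egraph; rewrite /sharp /= exy.
  + rewrite inE => /existsP[x /existsP[y /andP[exy /eqP ->]]] ->.
    by rewrite lift_set2; apply: mem_Egraph; rewrite /sharp /= eqxx exy orbT.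
  + by apply: mem_Egraph; rewrite /sharp /= eqxx /bump /= add1n eqxx /= !orbT.
Qed.

End Sharp.

Section Ladder.
Variables (T : finType) (m k1 k2 : nat).
Variables (p1 : T -> 'I_k1.+1 -> T) (p2 : T -> 'I_k2.+1 -> T).
Hypotheses (m_gt0 : 0 < m) (p1_0 : forall v, p1 v ord0 = v) (p2_0 : forall v, p2 v ord0 = v).

Definition ladder (v : T) (i : nat) : T * 'I_m.+1 :=
  if i <= k1 then (p1 v (inord (k1 - i)), ord0)
  else if i <= k1 + m then (v, inord (i - k1))
  else (p2 v (inord (i - k1 - m)), ord_max).

Definition ladder_path (v : T) (i : 'I_(k1 + m + k2).+1) : T * 'I_m.+1 := ladder v i.

Lemma ladder_lo v (a : 'I_k1.+1) : ladder v (k1 - a) = (p1 v a, ord0).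
Proof.
rewrite /ladder leq_subr; congr (p1 v _, _); apply: ord_inj.
have := ltn_ord a; rewrite inordK; lia.
Qed.

Lemma ladder_mid v (r : 'I_m.+1) : ladder v (k1 + r) = (v, r).
Proof.
rewrite /ladder; case: ifP => [le_r | _].
  have r0 : r = ord0 by apply: ord_inj => /=; lia.
  by rewrite r0 addn0 subnn -{2}(p1_0 v); congr (p1 v _, _); apply: ord_inj; rewrite inordK.
have -> : k1 + r <= k1 + m by have := ltn_ord r; lia.
by rewrite addKn inord_val.
Qed.

Lemma ladder_hi v (b : 'I_k2.+1) : ladder v (k1 + m + b) = (p2 v b, ord_max).
Proof.
rewrite /ladder; case: ifP => [|_]; first lia.
case: ifP => [le_b|_].
  have b0 : b = ord0 by apply: ord_inj => /=; lia.
  by rewrite b0 p2_0 /=; congr (v, _); apply: ord_inj; rewrite /= inordK; lia.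
by congr (p2 v _, _); apply: ord_inj; rewrite inordK; have := ltn_ord b; lia.
Qed.

Lemma ladder_level v i :
  (ladder v i).2 = (if i <= k1 then 0 else if i <= k1 + m then i - k1 else m) :> nat.
Proof.
by rewrite /ladder; case: ifP => // gt_i; case: ifP => //= le_i; rewrite inordK; lia.
Qed.

Lemma ladder_level_lt v i i' :
  i < i' -> k1 < i' -> i < k1 + m -> (ladder v i).2 < (ladder v i').2.
Proof. by rewrite !ladder_level; repeat case: ifP => ?; lia. Qed.

Lemma pedge_ladder_path v (j : 'I_(k1 + m + k2)) :
  pedge (ladder_path v) j = [set ladder v j; ladder v j.+1].
Proof. by []. Qed.

Variant ladder_edge_spec (j : nat) : Type :=
  | LadderLo (a : 'I_k1) of j = k1 - a.+1
  | LadderMid (r : 'I_m) of j = k1 + r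
  | LadderHi (b : 'I_k2) of j = k1 + m + b.

Lemma ladder_edgeP (j : 'I_(k1 + m + k2)) : ladder_edge_spec j.
Proof.
have := ltn_ord j; case: (ltnP j k1) => [lt_jk1 _ | le_k1j].
  have lt_a : k1 - j.+1 < k1 by lia.
  by apply: (@LadderLo _ (Ordinal lt_a)) => /=; lia.
case: (ltnP j (k1 + m)) => [lt_j _ | le_j lt_j].
  have lt_r : j - k1 < m by lia.
  by apply: (@LadderMid _ (Ordinal lt_r)) => /=; lia.
have lt_b : j - (k1 + m) < k2 by lia.
by apply: (@LadderHi _ (Ordinal lt_b)) => /=; lia.
Qed.

Lemma ladder_edge_lo v (a : 'I_k1) :
  [set ladder v (k1 - a.+1); ladder v (k1 - a.+1).+1] = lift_set ord0 (pedge (p1 v) a).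
Proof.
have -> : (k1 - a.+1).+1 = k1 - widen_ord (leqnSn k1) a by have := ltn_ord a; rewrite /=; lia.
by rewrite -[a.+1]/(val (lift ord0 a)) !ladder_lo lift_set2 setUC.
Qed.

Lemma ladder_edge_mid v (r : 'I_m) :
  [set ladder v (k1 + r); ladder v (k1 + r).+1] = pedge (rung_paths v) r.
Proof.
by rewrite -addnS -[r : nat]/(val (widen_ord (leqnSn m) r)) -[r.+1]/(val (lift ord0 r)) !ladder_mid.
Qed.

Lemma ladder_edge_hi v (b : 'I_k2) :
  [set ladder v (k1 + m + b); ladder v (k1 + m + b).+1] = lift_set ord_max (pedge (p2 v) b).
Proof.
rewrite -addnS -[b : nat]/(val (widen_ord (leqnSn k2) b)) -[b.+1]/(val (lift ord0 b)).
by rewrite !ladder_hi lift_set2.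
Qed.

Lemma ladder_edge_cases v (j : 'I_(k1 + m + k2)) :
  [\/ exists a, pedge (ladder_path v) j = lift_set ord0 (pedge (p1 v) a),
      exists r, pedge (ladder_path v) j = pedge (rung_paths v) r
    | exists b, pedge (ladder_path v) j = lift_set ord_max (pedge (p2 v) b)].
Proof.
rewrite pedge_ladder_path; case: (ladder_edgeP j) => [a|r|b] ->.
- by apply: Or31; exists a; rewrite ladder_edge_lo.
- by apply: Or32; exists r; rewrite ladder_edge_mid.
- by apply: Or33; exists b; rewrite ladder_edge_hi.
Qed.

Lemma mem_dvop_edges_ladder v j :
  j < k1 + m + k2 -> [set ladder v j; ladder v j.+1] \in dvop_edges ladder_path.
Proof. by move=> lt_j; apply: (mem_dvop_edges _ v (Ordinal lt_j)). Qed.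

Lemma dvop_edges_ladder :
  dvop_edges ladder_path =
  copy_at ord0 (dvop_edges p1) :|: copy_at ord_max (dvop_edges p2) :|: rungs T m.
Proof.
apply/setP => S; apply/idP/idP.
- case/imset2P => v j _ _ ->; rewrite !inE -orbA.
  case: (ladder_edge_cases v j) => -[x ->].
  + by apply/or3P/Or31/imsetP; exists (pedge (p1 v) x); rewrite ?mem_dvop_edges.
  + by rewrite mem_dvop_edges !orbT.
  + by apply/or3P/Or32/imsetP; exists (pedge (p2 v) x); rewrite ?mem_dvop_edges.
- case/setUP => [/setUP[] /imsetP[_ /imset2P[v x _ _ ->] ->] | /imset2P[v x _ _ ->]].
  + rewrite -ladder_edge_lo; apply: mem_dvop_edges_ladder; have := ltn_ord x; lia.
  + rewrite -ladder_edge_hi; apply: mem_dvop_edges_ladder; have := ltn_ord x; lia.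
  + rewrite -ladder_edge_mid; apply: mem_dvop_edges_ladder; have := ltn_ord x; lia.
Qed.

Lemma ladder_path_inj v :
  injective (p1 v) -> injective (p2 v) -> injective (ladder_path v).
Proof.
move=> inj1 inj2.
suff neq_lt i i' : i < i' <= k1 + m + k2 -> ladder v i != ladder v i'.
  move=> i i'; rewrite /ladder_path => eq_ii'; apply: ord_inj.
  have := ltn_ord i; have := ltn_ord i'; rewrite !ltnS.
  case: (ltngtP i i') => // lt_ii' le_i' le_i; [move: (neq_lt i i') | move: (neq_lt i' i)];
    by rewrite eq_ii' eqxx lt_ii' ?le_i ?le_i' => /(_ isT).
case/andP=> lt_ii' le_i'; case: (leqP i' k1) => [le_i'k1 | gt_i'k1].
  rewrite /ladder le_i'k1 (leq_trans (ltnW lt_ii')) //; apply/eqP => -[].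
  by move/inj1/(congr1 (@nat_of_ord _)); rewrite !inordK; lia.
case: (leqP (k1 + m) i) => [le_i | lt_i].
  have hi j : k1 + m <= j -> j <= k1 + m + k2 ->
      ladder v j = (p2 v (inord (j - (k1 + m))), ord_max).
    by move=> le_j le_jn; rewrite -ladder_hi (@inordK k2) ?subnKC //; lia.
  rewrite (hi i) ?(hi i'); try lia.
  by apply/eqP => -[/inj2/(congr1 (@nat_of_ord _))]; rewrite !inordK; lia.
by apply: contraTneq (ladder_level_lt v lt_ii' gt_i'k1 lt_i) => ->; rewrite ltnn.
Qed.

Lemma ladder_edges_distinct :
  (forall v v' j j', pedge (p1 v) j = pedge (p1 v') j' -> v = v' /\ j = j') ->
  (forall v v' j j', pedge (p2 v) j = pedge (p2 v') j' -> v = v' /\ j = j') ->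
  forall v v' j j', pedge (ladder_path v) j = pedge (ladder_path v') j' -> v = v' /\ j = j'.
Proof.
move=> dist1 dist2 v v' j j'; rewrite !pedge_ladder_path => eq_edges.
suff : v = v' /\ (j : nat) = j' by case=> -> /ord_inj ->.
have lo_neq_hi (x : T) (s s' : {set T}) : x \in s -> lift_set (@ord0 m) s != lift_set ord_max s'.
  by move=> xs; apply/eqP => /(lift_set_level xs)/(congr1 (@nat_of_ord _)) /=; lia.
move: eq_edges; case: (ladder_edgeP j) => [a|r|b] ->; case: (ladder_edgeP j') => [a'|r'|b'] ->;
  rewrite ?ladder_edge_lo ?ladder_edge_mid ?ladder_edge_hi.
- by move/lift_set_inj/dist1 => [-> ->].
- by move/esym/eqP; rewrite (negbTE (rung_neq_lift_set _ _ _ _)).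
- by move/eqP; rewrite (negbTE (lo_neq_hi _ _ _ (set21 _ _))).
- by move/eqP; rewrite (negbTE (rung_neq_lift_set _ _ _ _)).
- by move/rung_paths_inj => [-> ->].
- by move/eqP; rewrite (negbTE (rung_neq_lift_set _ _ _ _)).
- by move/esym/eqP; rewrite (negbTE (lo_neq_hi _ _ _ (set21 _ _))).
- by move/esym/eqP; rewrite (negbTE (rung_neq_lift_set _ _ _ _)).
- by move/lift_set_inj/dist2 => [-> ->].
Qed.

Variable e : rel T.

Lemma ladder_embedding :
  symmetric e -> (forall v, embedding e (p1 v)) -> (forall v, embedding e (p2 v)) ->
  forall v, embedding (sharp e m) (ladder_path v).
Proof.
move=> e_sym emb1 emb2 v; apply: embedding_Egraph.
- exact: sharp_sym.
- exact: ladder_path_inj (emb1 v).1 (emb2 v).1.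
move=> j; apply: subsetP (mem_dvop_edges ladder_path v j).
rewrite dvop_edges_ladder Egraph_sharp !setUSS ?imsetS ?dvop_edges_sub_Egraph //.
Qed.

End Ladder.

Theorem lemma7 (T : finType) (e : rel T) (e_sym : symmetric e)
  (e_irr : irreflexive e) (m k1 k2 : nat) (hm : 1 <= m)
  (p1 : T -> 'I_k1.+1 -> T) (p2 : T -> 'I_k2.+1 -> T)
  (E1 E2 : {set {set T}}) :
  DVOP e p1 -> dvop_edges p1 :&: E1 = set0 -> dvop_edges p1 :|: E1 = Egraph e ->
  DVOP e p2 -> dvop_edges p2 :&: E2 = set0 -> dvop_edges p2 :|: E2 = Egraph e ->
  exists q : T -> 'I_(k1 + m + k2).+1 -> T * 'I_m.+1,
    [/\ forall v, embedding (sharp e m) (q v),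
        forall v v' (j j' : 'I_(k1 + m + k2)),
          pedge (q v) j = pedge (q v') j' -> v = v' /\ j = j',
        [/\ dvop_edges q :&: copy_at (@ord0 m) E1 = set0,
             dvop_edges q :&: copy_at (@ord_max m) E2 = set0
           & copy_at (@ord0 m) E1 :&: copy_at (@ord_max m) E2 = set0]
      & dvop_edges q :|: copy_at (@ord0 m) E1 :|: copy_at (@ord_max m) E2
          = Egraph (sharp e m)].
Proof.
move=> [emb1 dist1 p1_0] D1E1 D1uE1 [emb2 dist2 p2_0] D2E2 D2uE2.
have [D1_nz E1_nz] : set0 \notin dvop_edges p1 /\ set0 \notin E1.
  by split; apply: (set0_notin_sub_Egraph (e := e)); rewrite -D1uE1 ?subsetUl ?subsetUr.
have D2_nz : set0 \notin dvop_edges p2.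
  by apply: (set0_notin_sub_Egraph (e := e)); rewrite -D2uE2 subsetUl.
have ord0_max : @ord0 m != ord_max by rewrite -val_eqE /= eq_sym -lt0n.
exists (ladder_path (m := m) p1 p2); split.
- exact: ladder_embedding.
- exact: ladder_edges_distinct.
- rewrite dvop_edges_ladder //; split.
  + rewrite !setIUl -copy_atI D1E1 copy_at0 copy_at_disjoint ?(eq_sym ord_max) //.
    by rewrite rungsI_copy_at !setU0.
  + by rewrite !setIUl -copy_atI D2E2 copy_at0 copy_at_disjoint // rungsI_copy_at !setU0.
  + exact: copy_at_disjoint.
- rewrite dvop_edges_ladder // Egraph_sharp -{1}D1uE1 -D2uE2 !copy_atU.
  by apply/setP => S; rewrite !inE; do !case: (S \in _).
Qed.
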